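(* Let $0\leq \alpha < 1$ and let $G$ be a connected graph with $n$ vertices and $m$ edges. Let $1\leq k\leq n$ and let $U=\{u_1,\ldots,u_{k-1}\}\subseteq V(G)$ be any set of $k-1$ vertices (empty if $k=1$). Then $$S_{k}(A_{\alpha}(G)) \geq \left(\alpha-\frac{1}{n-k+1}\right)\sum_{u\in U}d_u+\frac{2m-(1-\alpha)|\partial(U, V(G)\setminus U)|}{n-k+1}.$$
   Context: All graphs are simple and undirected. $d_u$ is the degree of vertex $u$. $A_{\alpha}(G)=\alpha D(G)+(1-\alpha)A(G)$, where $A(G)$ is the adjacency matrix and $D(G)$ the diagonal degree matrix. For a real symmetric matrix $M$ with eigenvalues $\lambda_1(M)\geq\cdots\geq\lambda_n(M)$, $S_k(M)=\sum_{i=1}^k\lambda_i(M)$. For $U,W\subseteq V(G)$, $\partial(U,W)$ is the set of edges joining a vertex of $U$ with a vertex of $W$. *)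

From HB Require Import structures.
From mathcomp Require Import all_boot all_order all_algebra.
Set Implicit Arguments. Unset Strict Implicit. Unset Printing Implicit Defensive.
Import Order.TTheory GRing.Theory Num.Theory.
Local Open Scope ring_scope.

Definition simple_graph (n : nat) (e : rel 'I_n) : Prop :=
  symmetric e /\ irreflexive e.

Definition connected_graph (n : nat) (e : rel 'I_n) : Prop :=
  forall x y : 'I_n, connect e x y.

Definition deg (n : nat) (e : rel 'I_n) (u : 'I_n) : nat := #|[set v | e u v]|.

Definition edges (n : nat) (e : rel 'I_n) : {set {set 'I_n}} :=
  [set E : {set 'I_n} | [exists u, exists v, e u v && (E == [set u; v])]].

Definition nedges (n : nat) (e : rel 'I_n) : nat := #|edges e|.

Definition boundary (n : nat) (e : rel 'I_n) (U W : {set 'I_n}) : {set {set 'I_n}} :=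
  [set E in edges e | [exists u in U, exists w in W, E == [set u; w]]].

Definition adjmx (R : nzRingType) (n : nat) (e : rel 'I_n) : 'M[R]_n :=
  \matrix_(i, j) (e i j)%:R.
Definition degmx (R : nzRingType) (n : nat) (e : rel 'I_n) : 'M[R]_n :=
  diag_mx (\row_i (deg e i)%:R).
Definition Aalpha (R : nzRingType) (n : nat) (e : rel 'I_n) (a : R) : 'M[R]_n :=
  a *: degmx R e + (1 - a) *: adjmx R e.

(* l is the list of eigenvalues of A (with algebraic multiplicity), in
   nonincreasing order: lambda_1 >= ... >= lambda_n. *)
Definition eigen_seq (R : numDomainType) (n : nat) (A : 'M[R]_n) (l : seq R) : Prop :=
  [/\ size l = n, sorted >=%R l & char_poly A = \prod_(x <- l) ('X - x%:P)].

Definition Sk (R : numDomainType) (k : nat) (l : seq R) : R := \sum_(i < k) l`_i.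
Arguments adjmx R [n] e.
Arguments degmx R [n] e.
Arguments Aalpha R [n] e a.

From HB Require Import structures.
From mathcomp Require Import all_boot all_order all_algebra.
From mathcomp Require Import perm complex ring zify.
Import Order.TTheory GRing.Theory Num.Theory.
Set Implicit Arguments. Unset Strict Implicit. Unset Printing Implicit Defensive.

(* Ky Fan's maximum principle: if A is real symmetric and X is an m x n matrix
   with orthonormal rows, then tr (X A X^T) <= S_m(A).  Writing A = P^-1 D P with
   P unitary, tr (X A X^T) = sum_j lambda_j w_j, where the weights w_j, the
   diagonal entries of Y Y^* for Y = P X^T, lie in [0, 1] by Bessel's inequality
   and add up to m; such a weighted sum is at most the sum of the m largest
   lambda_j.
   For the theorem, take as rows of X the unit vectors e_u (u in U) and the
   normalised indicator vector of W = V \ U.  Then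
   tr (X A_alpha X^T) = alpha sum_U d_u + 1_W^T A_alpha 1_W / |W|, and
   1_W^T A_alpha 1_W = sum_W d_w - (1 - alpha) |boundary(U, W)|, where
   sum_W d_w = 2m - sum_U d_u. *)

Lemma eq_set2 (T : finType) (a b c d : T) : [set a; b] = [set c; d] ->
  (a = c /\ b = d) \/ (a = d /\ b = c).
Proof.
move=> abcd.
have /set2P ha : a \in [set c; d] by rewrite -abcd set21.
have /set2P hb : b \in [set c; d] by rewrite -abcd set22.
have /set2P hc : c \in [set a; b] by rewrite abcd set21.
have /set2P hd : d \in [set a; b] by rewrite abcd set22.
by case: ha hb hc hd => ? [] ? [] ? [] ?; subst; tauto.
Qed.

Lemma card_set_sum (T : finType) (P : pred T) : #|[set x | P x]| = (\sum_x P x)%N.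
Proof.
rewrite -sum1_card big_mkcond /=; apply: eq_bigr => x _.
by rewrite inE; case: (P x).
Qed.

Section Graph.
Variables (n : nat) (e : rel 'I_n).
Hypothesis esym : symmetric e.
Hypothesis eirr : irreflexive e.

Lemma degE u : deg e u = (\sum_v e u v)%N.
Proof. exact: card_set_sum. Qed.

Lemma nedgesE :
  nedges e = (\sum_(u : 'I_n) \sum_(v : 'I_n) ((u < v)%N && e u v))%N.
Proof.
pose L := [set p : 'I_n * 'I_n | (p.1 < p.2)%N && e p.1 p.2].
have edgesE : edges e = [set [set p.1; p.2] | p in L].
  apply/setP => E; apply/idP/imsetP.
    rewrite inE => /existsP [a /existsP [b /andP [eab /eqP ->]]].
    have [ab|ba|ab] := ltngtP a b.
    - by exists (a, b) => //; rewrite inE /= ab eab.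
    - by exists (b, a); rewrite ?inE /= ?ba 1?esym // setUC.
    - by move: eab; rewrite (val_inj ab) eirr.
  case=> -[a b]; rewrite inE /= => /andP [_ eab] ->.
  by rewrite inE; apply/existsP; exists a; apply/existsP; exists b; rewrite eab /=.
have inj_L : {in L &, injective (fun p : 'I_n * 'I_n => [set p.1; p.2])}.
  move=> [a b] [c d]; rewrite !inE /= => /andP [ab _] /andP [cd _].
  case/eq_set2 => -[ac bd]; first by rewrite ac bd.
  by move: ab; rewrite ac bd => /(ltn_trans cd); rewrite ltnn.
by rewrite /nedges edgesE card_in_imset // card_set_sum pair_big.
Qed.

Lemma handshake : (2 * nedges e = \sum_u deg e u)%N.
Proof.
have degLR u : deg e u =
    (\sum_(v : 'I_n) ((u < v)%N && e u v) + \sum_(v : 'I_n) ((v < u)%N && e v u))%N.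
  rewrite degE -big_split /=; apply: eq_bigr => v _; rewrite (esym v).
  by have [uv|vu|uv] := ltngtP u v; rewrite ?andbF ?addn0 // (val_inj uv) eirr.
rewrite (eq_bigr _ (fun u _ => degLR u)) big_split /= [X in (_ + X)%N]exchange_big.
by rewrite /= -nedgesE addnn mul2n.
Qed.

Lemma card_boundary (U W : {set 'I_n}) : [disjoint U & W] ->
  #|boundary e U W| = (\sum_(u in U) \sum_(w in W) e u w)%N.
Proof.
move=> UW.
pose B := [set p : 'I_n * 'I_n | [&& p.1 \in U, p.2 \in W & e p.1 p.2]].
have boundaryE : boundary e U W = [set [set p.1; p.2] | p in B].
  apply/setP => E; apply/idP/imsetP.
    rewrite !inE => /andP [/existsP [a /existsP [b /andP [eab /eqP ->]]]].
    case/exists_inP => u uU /exists_inP [w wW /eqP /eq_set2].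
    case=> -[ea eb]; rewrite ea eb in eab *.
    - by exists (u, w); rewrite // inE /= uU wW.
    - by exists (u, w); rewrite 1?setUC // inE /= uU wW esym.
  case=> -[a b]; rewrite inE /= => /and3P [aU bW eab] ->.
  rewrite !inE; apply/andP; split.
    by apply/existsP; exists a; apply/existsP; exists b; rewrite eab /=.
  by apply/exists_inP; exists a => //; apply/exists_inP; exists b.
have inj_B : {in B &, injective (fun p : 'I_n * 'I_n => [set p.1; p.2])}.
  move=> [a b] [c d]; rewrite !inE /= => /and3P [aU _ _] /and3P [_ dW _].
  case/eq_set2 => -[ac bd]; first by rewrite ac bd.
  by move: aU; rewrite ac (disjointFl UW dW).
rewrite boundaryE card_in_imset // card_set_sum pair_big /= [RHS]big_mkcond /=.
by apply: eq_bigr => -[a b] _ /=; case: (a \in U); case: (b \in W).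
Qed.

End Graph.

Local Open Scope ring_scope.

Lemma weighted_sum_le_prefix (C : numDomainType) n m (L w : 'I_n -> C) :
  (forall i j : 'I_n, (i <= j)%N -> L j <= L i) ->
  (forall i, 0 <= w i <= 1) -> \sum_(i < n) w i = m%:R -> (0 < m <= n)%N ->
  \sum_(i < n) L i * w i <= \sum_(i < n | (i < m)%N) L i.
Proof.
move=> L_noninc w01 sum_w /andP[m0 mn].
have m1n : (m.-1 < n)%N by rewrite prednK.
(* [c] separates the [m] first values of [L] from the others, and subtracting
   [c * \sum_i ((i < m) - w i) = 0] makes every summand nonnegative. *)
set c := L (Ordinal m1n).
have sum_prefix : \sum_(i < n) ((i < m)%N%:R : C) = m%:R.
  transitivity (\sum_(i < n | (i < m)%N) (1 : C)).
    by rewrite [RHS]big_mkcond; apply: eq_bigr => i _; case: (i < m)%N.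
  by rewrite -(big_ord_widen n (fun _ => 1) mn) sumr_const card_ord.
rewrite -subr_ge0.
have -> : \sum_(i < n | (i < m)%N) L i - \sum_(i < n) L i * w i =
  \sum_(i < n) (if (i < m)%N then (L i - c) * (1 - w i) else (c - L i) * w i).
  have sum_c0 : \sum_(i < n) c * ((i < m)%N%:R - w i) = 0.
    by rewrite -mulr_sumr sumrB sum_prefix sum_w subrr mulr0.
  rewrite -[LHS]subr0 -[X in _ - X = _]sum_c0 big_mkcond -!sumrB /=.
  by apply: eq_bigr => i _; case: ifP => _; rewrite ?mulr1n ?mulr0n; ring.
apply: sumr_ge0 => i _; case: ifPn => im.
- apply: mulr_ge0; rewrite subr_ge0; last by case/andP: (w01 i).
  by apply: L_noninc; rewrite /= -ltnS prednK.
- apply: mulr_ge0; last by case/andP: (w01 i).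
  by rewrite subr_ge0 L_noninc //= (leq_trans (leq_pred m)) // leqNgt.
Qed.

Local Open Scope sesquilinear_scope.

Lemma trmxC_mul (C : numClosedFieldType) m n p (A : 'M[C]_(m, n)) (B : 'M[C]_(n, p)) :
  (A *m B)^t* = B^t* *m A^t*.
Proof. by rewrite trmx_mul map_mxM. Qed.

Lemma gram_diag_ge0 (C : numClosedFieldType) m n (M : 'M[C]_(m, n)) i :
  0 <= (M *m M^t*) i i.
Proof. by rewrite mxE; apply: sumr_ge0 => k _; rewrite !mxE mul_conjC_ge0. Qed.

Lemma bessel_inequality (C : numClosedFieldType) m n (Y : 'M[C]_(m, n)) (p : 'rV[C]_n) :
  Y *m Y^t* = 1%:M -> (p *m Y^t* *m (p *m Y^t*)^t*) 0 0 <= (p *m p^t*) 0 0.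
Proof.
move=> YY; set c := p *m Y^t*.
have cE : Y *m p^t* = c^t* by rewrite /c trmxC_mul trmxCK.
have pythagoras : (p - c *m Y) *m (p - c *m Y)^t* = p *m p^t* - c *m c^t*.
  rewrite !(linearB, map_mxB) /= !mulmxBl trmxC_mul.
  rewrite -!mulmxA [Y *m (Y^t* *m _)]mulmxA YY mul1mx cE [p *m (Y^t* *m _)]mulmxA -/c.
  by rewrite opprB addrA subrK.
by have := gram_diag_ge0 (p - c *m Y) 0; rewrite pythagoras !mxE subr_ge0.
Qed.

Lemma char_poly_similar (F : fieldType) n (P D : 'M[F]_n) : P \in unitmx ->
  char_poly (invmx P *m D *m P) = char_poly D.
Proof.
move=> Pu.
have E : char_poly_mx (invmx P *m D *m P) =
    map_mx polyC (invmx P) *m char_poly_mx D *m map_mx polyC P.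
  rewrite /char_poly_mx mulmxBr mulmxBl !map_mxM; congr (_ - _).
  by rewrite -mulmxA -scalar_mxC mulmxA -map_mxM mulVmx // map_mx1 mul1mx.
rewrite /char_poly E !det_mulmx mulrC mulrA -det_mulmx.
by rewrite -map_mxM mulmxV // map_mx1 det1 mul1r.
Qed.

Lemma spectral_diag_perm (C : numClosedFieldType) n (A : 'M[C]_n) l :
  A \is normalmx -> eigen_seq A l ->
  exists p : 'S_n, forall i, spectral_diag A 0 (p i) = l`_i.
Proof.
move=> /orthomx_spectralP AE [_ _ cpA].
have cpD : char_poly A = \prod_(x <- [tuple spectral_diag A 0 i | i < n]) ('X - x%:P).
  rewrite {1}AE char_poly_similar ?spectral_unit // char_poly_trig ?diag_mx_is_trig //.
  by rewrite /= big_map big_enum /=; apply: eq_bigr => i _; rewrite mxE eqxx mulr1n.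
have /tuple_permP [p lE] : perm_eq l [tuple spectral_diag A 0 i | i < n].
  by apply: prod_XsubC_eq; rewrite -cpA cpD.
by exists p => i; rewrite lE nth_mktuple tnth_mktuple.
Qed.

Lemma ky_fan_hermitian (C : numClosedFieldType) n m (A : 'M[C]_n) (X : 'M[C]_(m, n)) l :
  A^t* = A -> X *m X^t* = 1%:M -> eigen_seq A l -> (0 < m <= n)%N ->
  \tr (X *m A *m X^t*) <= Sk m l.
Proof.
move=> Aherm XX eigA mn; have /andP [_ m_le_n] := mn.
have Anormal : A \is normalmx by apply/normalmxP; rewrite Aherm.
have [p dE] := spectral_diag_perm Anormal eigA.
have /orthomx_spectralP := Anormal.
set P := spectralmx A; set d := spectral_diag A => AE.
have Pu : P \is unitarymx := spectral_unitarymx A.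
pose Y := P *m X^t*; pose w j := (Y *m Y^t*) j j.
have trE : \tr (X *m A *m X^t*) = \sum_j d 0 j * w j.
  have -> : X *m A *m X^t* = Y^t* *m (diag_mx d *m Y).
    by rewrite AE invmx_unitary // /Y trmxC_mul trmxCK !mulmxA.
  rewrite mxtrace_mulC -mulmxA; apply: eq_bigr => j _.
  by rewrite mul_diag_mx mxE.
have w_le1 j : w j <= 1.
  have rowE (M : 'M[C]_(n, _)) : (row j M *m (row j M)^t*) 0 0 = (M *m M^t*) j j.
    by rewrite !mxE; apply: eq_bigr => k _; rewrite !mxE.
  have := bessel_inequality (row j P) XX.
  by rewrite -row_mul !rowE (unitarymxP Pu) [X in _ <= X]mxE eqxx.
have sum_w : \sum_j w j = m%:R.
  have PtP : P^t* *m P = 1%:M.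
    by move: Pu; rewrite -trmxC_unitary => /unitarymxP; rewrite trmxCK.
  rewrite -[LHS]/(\tr (Y *m Y^t*)) mxtrace_mulC /Y trmxC_mul trmxCK.
  by rewrite mulmxA -[_ *m P]mulmxA PtP mulmx1 XX mxtrace1.
rewrite trE /Sk (big_ord_widen n (fun i => l`_i) m_le_n).
rewrite (reindex_inj (@perm_inj _ p)) /=.
under eq_bigr do rewrite dE.
case: eigA => size_l sorted_l _.
apply: weighted_sum_le_prefix => // [i j ij | i | ].
- by apply: (sorted_leq_nth ge_trans lexx 0 sorted_l); rewrite // inE size_l.
- by rewrite gram_diag_ge0 w_le1.
- by rewrite -sum_w [RHS](reindex_inj (@perm_inj _ p)).
Qed.

Lemma ky_fan_sym (R : rcfType) n m (A : 'M[R]_n) (X : 'M[R]_(m, n)) l :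
  A^T = A -> X *m X^T = 1%:M -> eigen_seq A l -> (0 < m <= n)%N ->
  \tr (X *m A *m X^T) <= Sk m l.
Proof.
move=> Asym XX [size_l sorted_l cpA] mn; have /andP [_ m_le_n] := mn.
pose f := real_complex R.
have trC p q (M : 'M[R]_(p, q)) : (map_mx f M)^t* = (map_mx f M)^T.
  by apply/matrixP => i j; rewrite !mxE conj_Creal //; apply/complex_realP; eexists.
have eigC : eigen_seq (map_mx f A) (map f l).
  split; first by rewrite size_map.
    by rewrite sorted_map; apply: sub_sorted sorted_l => x y; rewrite /= lecR.
  rewrite -map_char_poly cpA rmorph_prod big_map; apply: eq_bigr => x _.
  by rewrite rmorphB /= map_polyX map_polyC.
have AC : (map_mx f A)^t* = map_mx f A by rewrite trC map_trmx Asym.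
have XXC : map_mx f X *m (map_mx f X)^t* = 1%:M.
  by rewrite trC map_trmx -map_mxM XX map_mx1.
have := ky_fan_hermitian AC XXC eigC mn.
suff -> : Sk m (map f l) = f (Sk m l).
  by rewrite trC map_trmx -!map_mxM trace_map_mx lecR.
rewrite /Sk /f rmorph_sum; apply: eq_bigr => i _.
by rewrite (nth_map 0) // size_l (leq_trans _ m_le_n).
Qed.

Local Close Scope sesquilinear_scope.

Lemma sum_indicator (R : nzSemiRingType) (T : finType) (A : {pred T}) :
  \sum_x ((x \in A)%:R : R) = #|A|%:R.
Proof.
rewrite -sum1_card natr_sum [RHS]big_mkcond /=; apply: eq_bigr => x _.
by case: (x \in A).
Qed.

Section TestMatrix.
Variables (R : rcfType) (n : nat) (U : {set 'I_n}).

Definition set_rows : 'M[R]_(#|U|, n) := \matrix_(i, j) (enum_val i == j)%:R.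

Definition normed_indicator (W : {set 'I_n}) : 'rV[R]_n :=
  (Num.sqrt #|W|%:R)^-1 *: \row_j (j \in W)%:R.

Definition test_mx := col_mx set_rows (normed_indicator (~: U)).

Lemma set_rowsM p (M : 'M[R]_(n, p)) i j : (set_rows *m M) i j = M (enum_val i) j.
Proof.
rewrite mxE (bigD1 (enum_val i)) //= mxE eqxx mul1r big1 ?addr0 // => j' ne.
by rewrite mxE eq_sym (negbTE ne) mul0r.
Qed.

Lemma mul_set_rows_tr p (M : 'M[R]_(p, n)) i j :
  (M *m set_rows^T) i j = M i (enum_val j).
Proof.
rewrite mxE (bigD1 (enum_val j)) //= !mxE eqxx mulr1 big1 ?addr0 // => j' ne.
by rewrite !mxE eq_sym (negbTE ne) mulr0.
Qed.

Lemma set_rows_orthonormal : set_rows *m set_rows^T = 1%:M.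
Proof.
by apply/matrixP => i j; rewrite set_rowsM !mxE (inj_eq enum_val_inj) eq_sym.
Qed.

Lemma set_rows_indicatorC : set_rows *m (normed_indicator (~: U))^T = 0.
Proof.
by apply/matrixP => i j; rewrite set_rowsM !mxE inE enum_valP mulr0.
Qed.

Lemma normed_indicator_unit (W : {set 'I_n}) : (0 < #|W|)%N ->
  normed_indicator W *m (normed_indicator W)^T = 1%:M.
Proof.
move=> W_gt0; apply/matrixP => i j; rewrite !ord1 !mxE /=.
under eq_bigr => x _ do rewrite !mxE mulrACA -natrM mulnb andbb.
rewrite -mulr_sumr sum_indicator -invfM -expr2 sqr_sqrtr ?ler0n //.
by rewrite mulVf // pnatr_eq0 -lt0n.
Qed.

Lemma trace_set_rows (A : 'M[R]_n) :
  \tr (set_rows *m A *m set_rows^T) = \sum_(u in U) A u u.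
Proof.
rewrite [RHS](big_enum_val (A := pred_of_set U)); apply: eq_bigr => i _.
by rewrite mul_set_rows_tr set_rowsM.
Qed.

Lemma trace_normed_indicator (W : {set 'I_n}) (A : 'M[R]_n) :
  \tr (normed_indicator W *m A *m (normed_indicator W)^T) =
  (\sum_(i in W) \sum_(j in W) A i j) / #|W|%:R.
Proof.
rewrite /mxtrace big_ord1 mxE.
pose c : R := (Num.sqrt #|W|%:R)^-1.
have c2 : #|W|%:R^-1 = c * c :> R by rewrite -invfM -expr2 sqr_sqrtr ?ler0n.
transitivity (\sum_j \sum_i (c * (i \in W)%:R) * A i j * (c * (j \in W)%:R)).
  by apply: eq_bigr => j _; rewrite !mxE mulr_suml; apply: eq_bigr => i _; rewrite !mxE.
rewrite exchange_big c2 mulr_suml [RHS]big_mkcond; apply: eq_bigr => i _ /=.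
case: (i \in W); last by rewrite big1 // => j _; rewrite mulr0 !mul0r.
rewrite mulr_suml [RHS]big_mkcond; apply: eq_bigr => j _ /=.
by case: (j \in W); rewrite ?mulr0 //= !mulr1n; ring.
Qed.

Lemma test_mx_orthonormal : (0 < #|~: U|)%N -> test_mx *m test_mx^T = 1%:M.
Proof.
move=> UC_gt0; have vS := set_rows_indicatorC.
have Sv : normed_indicator (~: U) *m set_rows^T = 0.
  by rewrite -[LHS]trmxK trmx_mul trmxK vS trmx0.
rewrite tr_col_mx mul_col_row set_rows_orthonormal vS Sv normed_indicator_unit //.
by rewrite -scalar_mx_block.
Qed.

Lemma trace_test_mx (A : 'M[R]_n) : \tr (test_mx *m A *m test_mx^T) =
  \sum_(u in U) A u u + (\sum_(i in ~: U) \sum_(j in ~: U) A i j) / #|~: U|%:R.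
Proof.
rewrite tr_col_mx mul_col_mx mul_col_row mxtrace_block.
by rewrite trace_set_rows trace_normed_indicator.
Qed.

End TestMatrix.

Section AlphaAdjacency.
Variables (R : comNzRingType) (n : nat) (e : rel 'I_n) (a : R).
Hypothesis esym : symmetric e.
Hypothesis eirr : irreflexive e.

Lemma Aalpha_sym : (Aalpha R e a)^T = Aalpha R e a.
Proof.
by apply/matrixP => i j; rewrite !mxE esym eq_sym; have [->|] := eqVneq i j.
Qed.

Lemma Aalpha_diag u : Aalpha R e a u u = a * (deg e u)%:R.
Proof. by rewrite !mxE eqxx mulr1n eirr mulr0 addr0. Qed.

Lemma sum_deg_setC (U : {set 'I_n}) :
  \sum_(u in U) (deg e u)%:R + \sum_(u in ~: U) (deg e u)%:R = (2 * nedges e)%:R :> R.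
Proof.
rewrite handshake // natr_sum [RHS](bigID (mem U)) /=.
by congr (_ + _); apply: eq_bigl => u; rewrite inE.
Qed.

Lemma sum_deg_boundary (U : {set 'I_n}) :
  \sum_(i in ~: U) (deg e i)%:R =
  \sum_(i in ~: U) \sum_(j in ~: U) (e i j)%:R + #|boundary e U (~: U)|%:R :> R.
Proof.
have UUC : [disjoint U & ~: U] by rewrite -subsets_disjoint.
have -> : #|boundary e U (~: U)|%:R = \sum_(i in ~: U) \sum_(j in U) (e i j)%:R :> R.
  rewrite card_boundary // natr_sum; under eq_bigr do rewrite natr_sum.
  by rewrite exchange_big; apply: eq_bigr => i _; apply: eq_bigr => j _; rewrite esym.
rewrite -big_split; apply: eq_bigr => i _ /=.
rewrite degE natr_sum (bigID (mem (~: U))) /=.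
by congr (_ + _); apply: eq_bigl => j; rewrite ?inE ?negbK.
Qed.

Lemma sum_Aalpha_setC (U : {set 'I_n}) :
  \sum_(i in ~: U) \sum_(j in ~: U) Aalpha R e a i j =
  \sum_(i in ~: U) (deg e i)%:R - (1 - a) * #|boundary e U (~: U)|%:R.
Proof.
have entriesE : \sum_(i in ~: U) \sum_(j in ~: U) Aalpha R e a i j =
    a * \sum_(i in ~: U) (deg e i)%:R +
    (1 - a) * \sum_(i in ~: U) \sum_(j in ~: U) (e i j)%:R.
  rewrite !mulr_sumr -big_split; apply: eq_bigr => i iUC /=.
  rewrite (eq_bigr (fun j => a * ((deg e i)%:R *+ (i == j)) + (1 - a) * (e i j)%:R)).
    rewrite big_split /= -!mulr_sumr (bigD1 i) //= eqxx mulr1n big1 ?addr0 // => j.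
    by case/andP => _ ij; rewrite eq_sym (negbTE ij) mulr0n.
  by move=> j _; rewrite !mxE.
by rewrite entriesE sum_deg_boundary; ring.
Qed.

End AlphaAdjacency.

Theorem theorem5p4 (R : rcfType) (alpha : R) (n : nat) (e : rel 'I_n)
  (k : nat) (U : {set 'I_n}) (l : seq R) :
  0 <= alpha -> alpha < 1 ->
  simple_graph e -> connected_graph e ->
  (1 <= k <= n)%N -> #|U| = k.-1 ->
  eigen_seq (Aalpha R e alpha) l ->
  Sk k l >=
    (alpha - 1 / (n - k + 1)%:R) * (\sum_(u in U) (deg e u)%:R)
    + ((2 * nedges e)%:R - (1 - alpha) * (#|boundary e U (~: U)|)%:R)
        / (n - k + 1)%:R.
Proof.
move=> _ _ [esym eirr] _ /andP [k_gt0 k_le_n] cardU eigA.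
have k_eq : k = (#|U| + 1)%N by rewrite cardU addn1 prednK.
have cardUC : #|~: U| = (n - k + 1)%N.
  by have := cardsC U; rewrite card_ord cardU; lia.
have UC_gt0 : (0 < #|~: U|)%N by rewrite cardUC addn1.
have mk : (0 < #|U| + 1 <= n)%N by rewrite -k_eq k_gt0.
have SkE : Sk (#|U| + 1) l = Sk k l by rewrite -k_eq.
have := ky_fan_sym (Aalpha_sym alpha esym) (test_mx_orthonormal R UC_gt0) eigA mk.
rewrite SkE => /(le_trans _); apply.
rewrite trace_test_mx sum_Aalpha_setC // cardUC -(sum_deg_setC _ esym eirr U).
rewrite (eq_bigr _ (fun u _ => Aalpha_diag alpha eirr u)) -mulr_sumr.
by rewrite le_eqVlt; apply/orP; left; apply/eqP; ring.
Qed.
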